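(* Consider the packet erasure broadcast model below with $n\ge 1$ receivers, operated under Algorithm 1 (drop when decoded), and assume $\lambda<\mu$. Then the expected size of the sender's physical queue in steady state is $\Omega\left(\frac{1}{(1-\rho)^2}\right)$ as $\rho=\lambda/\mu\to 1^-$, where $\lambda,\mu\in(0,1)$ and one of $\lambda,\mu$ is held fixed while the other varies so that $\rho$ increases to $1$.
   Context: Model: a sender broadcasts a stream of packets to $n$ receivers. Packets are fixed-length vectors over a finite field $\mathbb{F}_q$; the $k$-th packet to arrive at the sender is $\mathbf{p}_k$. Time is slotted. In each slot one new packet arrives at the sender with probability $\lambda$, independently across slots, just after the beginning of the slot. The sender has an unbounded queue (the physical queue); in each slot it may transmit one linear combination of the packets in its queue, whose coefficient vector with respect to the original packets is carried in the header. Each receiver independently receives the transmission with probability $\mu$ and otherwise suffers a (detectable) erasure; erasures are independent across receivers and slots. Feedback is perfect and reaches the sender before the end of the slot; packets are dropped from the queue just before the end of the slot; queue sizes are measured at the end of the slot. The load factor is $\rho=\lambda/\mu$. The knowledge space of a node is the space of coefficient vectors (with respect to the packets arrived so far) of linear combinations of packets it can compute; the sender's knowledge space after $A$ arrivals is $\mathbb{F}_q^A$. The virtual queue of receiver $j$ has size equal to the dimension of the sender's knowledge space minus that of receiver $j$'s. Algorithm 1: in each slot the sender transmits a random linear combination of all packets currently in its queue; the field is assumed large enough that every transmission is innovative (lies outside the knowledge space) for every receiver whose knowledge space differs from the sender's. A receiver reports decoding to the sender, and the sender regards a receiver as having decoded the packets only at times when that receiver's virtual queue becomes empty (earlier decodings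 are ignored). The sender drops a packet from its queue once all receivers have decoded it in this sense. *)

From HB Require Import structures.
From mathcomp Require Import all_boot all_order all_algebra.
From mathcomp Require Import reals.
Set Implicit Arguments. Unset Strict Implicit. Unset Printing Implicit Defensive.
Import Order.TTheory GRing.Theory Num.Theory.

Section Model.
Variable n : nat.

(* Random outcome of one slot: (new arrival?, which receivers got the
   transmission). *)
Definition slot : finType := (bool * {ffun 'I_n -> bool})%type.

(* System state at the end of a slot:
   - arrivals  = A, the number of packets arrived so far (the sender's
                 knowledge space is F_q^A);
   - vq j      = size of receiver j's virtual queue
                 = A - dim(knowledge space of receiver j);
   - decoded j = the number of packets the sender regards receiver j as
                 having decoded: the value of A at the last slot end at which
                 receiver j's virtual queue was empty (0 initially). *)
Record state := State {
  arrivals : nat;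
  vq : {ffun 'I_n -> nat};
  decoded : {ffun 'I_n -> nat} }.

Definition init_state : state := State 0 [ffun => 0%N] [ffun => 0%N].

(* The arrival happens at the beginning of the slot, so it can be
   part of the transmitted combination.  Since every transmission is
   innovative for every receiver whose knowledge space differs from the
   sender's, receiver j's knowledge dimension grows by one iff it receives
   the packet and its virtual queue (after the arrival) is nonempty. *)
Definition step (s : state) (w : slot) : state :=
  let A' := (arrivals s + w.1)%N in
  let Q' := [ffun j => if (0 < vq s j + w.1)%N && w.2 j
                       then (vq s j + w.1).-1 else (vq s j + w.1)%N] in
  let D' := [ffun j => if Q' j == 0%N then A' else decoded s j] in
  State A' Q' D'.

Definition run (t : nat) (om : {ffun 'I_t -> slot}) : state :=
  foldl step init_state [seq om i | i <- enum 'I_t].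

(* Packet k (1-based) is dropped once every receiver j has decoded it in the
   sender's sense, i.e. k <= decoded j for all j.  Hence the physical queue
   holds the packets k with min_j decoded j < k <= A. *)
Definition phys_queue (s : state) : nat :=
  (arrivals s - \big[minn/arrivals s]_(j < n) decoded s j)%N.

Variable R : realType.
Local Open Scope ring_scope.

Definition slot_prob (lam mu : R) (w : slot) : R :=
  (if w.1 then lam else 1 - lam) *
  \prod_(j < n) (if w.2 j then mu else 1 - mu).

Definition path_prob (lam mu : R) (t : nat) (om : {ffun 'I_t -> slot}) : R :=
  \prod_(i < t) slot_prob lam mu (om i).

Definition expected_queue (lam mu : R) (t : nat) : R :=
  \sum_(om : {ffun 'I_t -> slot}) path_prob lam mu om * (phys_queue (run om))%:R.

End Model.

From mathcomp Require Import all_boot all_order all_algebra.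
From mathcomp Require Import reals.
From mathcomp Require Import ring lra zify.
Import Order.TTheory GRing.Theory Num.Theory.
Set Implicit Arguments. Unset Strict Implicit. Unset Printing Implicit Defensive.
Local Open Scope ring_scope.

(* Fix a receiver j.  The b packets that arrived since j's virtual queue was
   last empty cannot have been dropped, so b bounds the physical queue from
   below, and the pair (x, b), x the length of j's virtual queue, is a Markov
   chain; away from x = 0, x is a random walk with up and down probabilities
   pu = lam (1 - mu) and pd = mu (1 - lam).  For the Lyapunov function
   W (x, b) = b G(x) + alpha x - beta G(x), where G(x) = 1 + theta + ... +
   theta^(x-1) and theta = pu / pd, the one-step drift is at least
   gam - C b.  Telescoping from the empty state, with W <= M b and the
   monotonicity of t |-> E b_t (the chain is stochastically monotone and starts
   at its least state), gives t gam <= (M + C t) E b_t, hence E b_t >= gam / 2C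
   for large t.  Finally gam / 2C = kappa / (1 - rho)^2, and kappa stays
   bounded away from 0 when either rate is fixed and rho -> 1. *)

Section PathSpace.
Variables (n : nat) (R : realType).

Definition path_snoc t (om : {ffun 'I_t -> slot n}) (w : slot n) :
  {ffun 'I_t.+1 -> slot n} :=
  [ffun i => oapp om w (insub (val i))].

Definition path_init t (f : {ffun 'I_t.+1 -> slot n}) : {ffun 'I_t -> slot n} :=
  [ffun i => f (widen_ord (leqnSn t) i)].

Lemma path_snoc_widen t om w (i : 'I_t) :
  path_snoc om w (widen_ord (leqnSn t) i) = om i.
Proof. by rewrite ffunE /= (valK i). Qed.

Lemma path_snoc_last t om w : path_snoc (t:=t) om w ord_max = w.
Proof. by rewrite ffunE /= insubN // ltnn. Qed.

Lemma path_initK t (f : {ffun 'I_t.+1 -> slot n}) :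
  path_snoc (path_init f) (f ord_max) = f.
Proof.
apply/ffunP=> i; rewrite ffunE; case: insubP => [j /= _ ej|].
  by rewrite ffunE; congr (f _); apply: val_inj; rewrite /= ej.
rewrite -leqNgt => hi; congr (f _); apply: val_inj => /=.
by apply/eqP; rewrite eqn_leq hi -ltnS ltn_ord.
Qed.

Lemma path_snocK t om w : path_init (path_snoc (t:=t) om w) = om.
Proof. by apply/ffunP=> i; rewrite ffunE path_snoc_widen. Qed.

Lemma sum_path_snoc t (F : {ffun 'I_t.+1 -> slot n} -> R) :
  \sum_f F f = \sum_(om : {ffun 'I_t -> slot n}) \sum_(w : slot n) F (path_snoc om w).
Proof.
rewrite pair_bigA /= (reindex (fun p => path_snoc p.1 p.2)) //=.
exists (fun f => (path_init f, f ord_max)) => [[om w] _|f _] /=.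
  by rewrite path_snocK path_snoc_last.
by rewrite path_initK.
Qed.

Lemma run_snoc t om w : run (path_snoc (t:=t) om w) = step (run om) w.
Proof.
rewrite /run enum_ordSr map_rcons -map_comp foldl_rcons path_snoc_last.
by congr (step (foldl _ _ _) _); apply: eq_map => i /=; rewrite path_snoc_widen.
Qed.

Lemma path_prob_snoc (l m : R) t om w :
  path_prob l m (path_snoc (t:=t) om w) = path_prob l m om * slot_prob l m w.
Proof.
rewrite /path_prob big_ord_recr path_snoc_last; congr (_ * _).
by apply: eq_bigr => i _; rewrite path_snoc_widen.
Qed.

End PathSpace.

Definition bern (R : realType) (p : R) (a : bool) : R := if a then p else 1 - p.

Lemma bern_ge0 (R : realType) (p : R) a : 0 <= p <= 1 -> 0 <= bern p a.
Proof. by case: a => /andP[? ?] /=; lra. Qed.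

Section TransitionOperator.
Variables (R : realType) (S : Type) (next : S -> bool -> bool -> S) (l m : R).

(* The transition operator: iter t transop g z is the expectation of g after
   t steps from z. *)
Definition transop (g : S -> R) (z : S) : R :=
  \sum_(a : bool) \sum_(r : bool) bern l a * bern m r * g (next z a r).

Local Notation P := transop.

Lemma eq_transop f g z : f =1 g -> P f z = P g z.
Proof. by move=> e; apply: eq_bigr => a _; apply: eq_bigr => r _; rewrite e. Qed.

Lemma transop_lin (c1 c2 : R) f g z :
  P (fun y => c1 * f y + c2 * g y) z = c1 * P f z + c2 * P g z.
Proof.
rewrite /transop !mulr_sumr -big_split; apply: eq_bigr => a _.
rewrite !mulr_sumr -big_split; apply: eq_bigr => r _ /=; ring.
Qed.

Lemma transop_cst c z : P (fun=> c) z = c.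
Proof. rewrite /transop !big_bool /bern /=; ring. Qed.

Lemma eq_iter_transop t f g z : f =1 g -> iter t P f z = iter t P g z.
Proof.
move=> e; elim: t z => [|t IH] z; first exact: e.
by rewrite !iterS; apply: eq_transop.
Qed.

Lemma iter_transop_lin t (c1 c2 : R) f g z :
  iter t P (fun y => c1 * f y + c2 * g y) z = c1 * iter t P f z + c2 * iter t P g z.
Proof.
elim: t z => [//|t IH] z.
by rewrite !iterS (eq_transop _ IH) transop_lin.
Qed.

Lemma iter_transop_cst t c z : iter t P (fun=> c) z = c.
Proof. by elim: t z => [//|t IH] z; rewrite iterS (eq_transop _ IH) transop_cst. Qed.

Lemma iter_transop_telescope t g z :
  iter t P g z = g z + \sum_(s < t) iter s P (fun y => P g y - g y) z.
Proof.
elim: t => [|t IH]; first by rewrite big_ord0 addr0.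
rewrite big_ord_recr addrA -IH iterSr.
have := iter_transop_lin t 1 1 g (fun y => P g y - g y) z.
by rewrite !mul1r => <-; apply: eq_iter_transop => y; ring.
Qed.

Hypotheses (l01 : 0 <= l <= 1) (m01 : 0 <= m <= 1).
Variable I : S -> Prop.
Hypothesis I_next : forall z a r, I z -> I (next z a r).

Lemma ler_transop f g z :
  (forall y, I y -> f y <= g y) -> I z -> P f z <= P g z.
Proof.
move=> fg Iz; apply: ler_sum => a _; apply: ler_sum => r _.
by apply: ler_wpM2l; [apply: mulr_ge0; apply: bern_ge0 | apply/fg/I_next].
Qed.

Lemma ler_iter_transop t f g z :
  (forall y, I y -> f y <= g y) -> I z -> iter t P f z <= iter t P g z.
Proof.
move=> fg; elim: t z => [|t IH] z Iz; first exact: fg.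
by rewrite !iterS; apply: ler_transop => // y /IH.
Qed.

End TransitionOperator.

(* The chain of one receiver: x is its virtual-queue length and b the number
   of packets arrived since that queue was last empty.  The sender cannot
   have dropped these b packets, so b bounds the physical queue from below. *)
Definition rx_step (z : nat * nat) (a r : bool) : nat * nat :=
  let y := (z.1 + a)%N in
  let x' := if (0 < y)%N && r then y.-1 else y in
  (x', if x' == 0%N then 0%N else (z.2 + a)%N).

Definition backlog {R : realType} (z : nat * nat) : R := z.2%:R.

Definition rx_reachable (z : nat * nat) : Prop :=
  (z.1 <= z.2)%N /\ (z.1 = 0%N -> z.2 = 0%N).

Lemma rx_reachable_step z a r : rx_reachable z -> rx_reachable (rx_step z a r).
Proof.
case: z => x b [/= le_xb x0_b0]; rewrite /rx_step /rx_reachable /=.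
case: ifP => _; case: eqP => //= x'0; lia.
Qed.

Lemma rx_step1 z a r : (rx_step z a r).1 = (z.1 + a - r)%N.
Proof. by rewrite /rx_step /=; case: r; case: (z.1 + a)%N => [|k] //=; lia. Qed.

Definition coord_mono (R : realType) (f : nat * nat -> R) :=
  forall x1 b1 x2 b2, (x1 <= x2)%N -> (b1 <= b2)%N -> f (x1, b1) <= f (x2, b2).

Lemma backlog_mono (R : realType) : coord_mono (@backlog R).
Proof. by move=> x1 b1 x2 b2 _ le_b; rewrite /backlog ler_nat. Qed.

Lemma rx_step_mono x1 b1 x2 b2 a r : (x1 <= x2)%N -> (b1 <= b2)%N ->
  ((rx_step (x1, b1) a r).1 <= (rx_step (x2, b2) a r).1)%N /\
  ((rx_step (x1, b1) a r).2 <= (rx_step (x2, b2) a r).2)%N.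
Proof.
move=> le_x le_b; have le1 : ((rx_step (x1, b1) a r).1 <= (rx_step (x2, b2) a r).1)%N.
  by rewrite !rx_step1 /=; lia.
split=> //; move: le1; rewrite /rx_step /=.
case: ifP => _; case: ifP => _; case: eqP => ?; case: eqP => ? //=; lia.
Qed.

Section ReceiverChain.
Variables (R : realType) (l m : R).

Local Notation P := (transop rx_step l m).

Definition rx_expect t (g : nat * nat -> R) : R := iter t P g (0, 0)%N.

Lemma rx_expect_lin t (c1 c2 : R) f g :
  rx_expect t (fun z => c1 * f z + c2 * g z) = c1 * rx_expect t f + c2 * rx_expect t g.
Proof. exact: iter_transop_lin. Qed.

Lemma rx_expect_cst t c : rx_expect t (fun=> c) = c.
Proof. exact: iter_transop_cst. Qed.

Hypotheses (l01 : 0 <= l <= 1) (m01 : 0 <= m <= 1).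

Lemma ler_rx_expect t f g :
  (forall z, rx_reachable z -> f z <= g z) -> rx_expect t f <= rx_expect t g.
Proof. by move=> fg; apply: (ler_iter_transop l01 m01 rx_reachable_step). Qed.

Lemma transop_coord_mono f : coord_mono f -> coord_mono (P f).
Proof.
move=> f_mono x1 b1 x2 b2 le_x le_b; apply: ler_sum => a _; apply: ler_sum => r _.
apply: ler_wpM2l; first by apply: mulr_ge0; apply: bern_ge0.
have [] := rx_step_mono a r le_x le_b.
by case: (rx_step (x1, b1) a r) (rx_step (x2, b2) a r) => ? ? [? ?]; apply: f_mono.
Qed.

Lemma iter_transop_coord_mono t f : coord_mono f -> coord_mono (iter t P f).
Proof. by move=> f_mono; elim: t => [//|t IH]; rewrite iterS; apply: transop_coord_mono. Qed.

(* The chain starts at the least state (0, 0), so a monotone observable has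
   nondecreasing expectation. *)
Lemma rx_expect_leS t g : coord_mono g -> rx_expect t g <= rx_expect t.+1 g.
Proof.
move=> g_mono; rewrite /rx_expect iterS.
rewrite -{1}(transop_cst rx_step l m (iter t P g (0, 0)%N) (0, 0)%N).
apply: (ler_transop l01 m01 (I := fun=> True)) => // -[x b] _.
exact: iter_transop_coord_mono.
Qed.

Lemma sum_rx_expect_le t g : coord_mono g ->
  \sum_(s < t) rx_expect s g <= t%:R * rx_expect t g.
Proof.
move=> g_mono; elim: t => [|t IH]; first by rewrite big_ord0 mul0r.
rewrite big_ord_recr /= -natr1 mulrDl mul1r.
have le_tS := rx_expect_leS t g_mono.
apply: lerD => //; apply: le_trans IH _; exact: ler_wpM2l.
Qed.

End ReceiverChain.

Section Projection.
Variables (R : realType) (n : nat) (j0 : 'I_n).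

Definition rx_state (s : state n) : nat * nat :=
  (vq s j0, (arrivals s - decoded s j0)%N).

Lemma rx_state_step s w : (decoded s j0 <= arrivals s)%N ->
  rx_state (step s w) = rx_step (rx_state s) w.1 (w.2 j0).
Proof.
move=> le_DA; rewrite /rx_state /step /rx_step /= !ffunE /=.
by case: ifP => _ /=; case: ifP => _ //; rewrite ?subnn ?addnBAC.
Qed.

Lemma decoded_le_arrivals t (om : {ffun 'I_t -> slot n}) :
  (decoded (run om) j0 <= arrivals (run om))%N.
Proof.
elim: t om => [|t IH] om; first by rewrite /run enum_ord0 /= ffunE.
rewrite -(path_initK om) run_snoc /step /= ffunE.
by case: ifP => _ //; exact: leq_trans (IH _) (leq_addr _ _).
Qed.

Lemma sum_slot_prob_marginal (l m : R) (h : bool -> bool -> R) :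
  \sum_(w : slot n) slot_prob l m w * h w.1 (w.2 j0) =
  \sum_(a : bool) \sum_(r : bool) bern l a * bern m r * h a r.
Proof.
rewrite -(pair_bigA _ (fun a (f : {ffun 'I_n -> bool}) =>
   slot_prob l m (a, f) * h a (f j0))) /=.
apply: eq_bigr => a _.
have -> : \sum_(r : bool) bern l a * bern m r * h a r =
  bern l a * \prod_(i < n) \sum_(r : bool) bern m r * (if i == j0 then h a r else 1).
  rewrite [in RHS](bigD1 j0) //= [X in _ * (_ * X)]big1 ?mulr1; last first.
    by move=> i /negbTE ->; rewrite big_bool /bern /=; lra.
  by rewrite mulr_sumr; apply: eq_bigr => r _; rewrite eqxx mulrA.
rewrite bigA_distr_bigA mulr_sumr; apply: eq_bigr => f _.
rewrite /slot_prob /= -mulrA; congr (_ * _).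
rewrite big_split /=; congr (_ * _).
rewrite (bigD1 j0) //= eqxx big1 ?mulr1 //.
by move=> i /negbTE ->.
Qed.

Lemma sum_path_prob_rx_state (l m : R) t (g : nat * nat -> R) :
  \sum_(om : {ffun 'I_t -> slot n}) path_prob l m om * g (rx_state (run om)) =
  rx_expect l m t g.
Proof.
rewrite /rx_expect; elim: t g => [|t IH] g.
  rewrite (eq_bigr (fun _ => g (0, 0)%N)); last first.
    move=> om _.
    by rewrite /path_prob big_ord0 mul1r /run enum_ord0 /= /rx_state /= ffunE.
  by rewrite sumr_const card_ffun card_ord expn0.
rewrite iterSr -IH sum_path_snoc; apply: eq_bigr => om _.
rewrite /transop -(sum_slot_prob_marginal l m (fun a r => g (rx_step _ a r))).
rewrite mulr_sumr; apply: eq_bigr => w _.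
by rewrite path_prob_snoc run_snoc rx_state_step ?decoded_le_arrivals // mulrA.
Qed.

Lemma backlog_le_phys_queue s : (arrivals s - decoded s j0 <= phys_queue s)%N.
Proof.
rewrite /phys_queue leq_sub2l //.
by have := @bigmin_le _ nat _ (arrivals s) j0 (fun j => decoded s j); rewrite minEnat.
Qed.

Lemma slot_prob_ge0 (l m : R) (w : slot n) : 0 <= l <= 1 -> 0 <= m <= 1 -> 0 <= slot_prob l m w.
Proof.
move=> l01 m01; apply: mulr_ge0; first exact: (bern_ge0 w.1 l01).
by apply: prodr_ge0 => i _; exact: (bern_ge0 (w.2 i) m01).
Qed.

Lemma rx_backlog_le_expected_queue (l m : R) t : 0 <= l <= 1 -> 0 <= m <= 1 ->
  rx_expect l m t backlog <= expected_queue n l m t.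
Proof.
move=> l01 m01; rewrite -sum_path_prob_rx_state /expected_queue.
apply: ler_sum => om _; apply: ler_wpM2l.
  by apply: prodr_ge0 => i _; apply: slot_prob_ge0.
by rewrite /backlog ler_nat backlog_le_phys_queue.
Qed.

End Projection.

Section Drift.
Variables (R : realType) (l m : R).
Hypotheses (l_gt0 : 0 < l) (lt_lm : l < m) (m_lt1 : m < 1).

(* lra and nra do not use section hypotheses unless they are copied into the
   goal context. *)
Ltac rates := have := l_gt0; have := lt_lm; have := m_lt1; move=> ? ? ?.
Ltac neq0 := repeat (apply/andP; split); apply/eqP => ?; nra.

Local Notation P := (transop rx_step l m).

(* Away from 0 the virtual queue moves up w.p. pu and down w.p. pd. *)
Definition pu := l * (1 - m).
Definition pd := m * (1 - l).
Definition theta := pu / pd.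

(* geom x = 1 + theta + ... + theta ^ (x - 1) *)
Definition geom (x : nat) : R := (1 - theta ^+ x) * (pd / (pd - pu)).
Definition gam := l * pu * pd / ((pd - pu) * (pu + pd)).
Definition crate := (pd ^+ 2 - pu ^+ 2) / pd.
Definition lyap (z : nat * nat) : R :=
  z.2%:R * geom z.1 + gam * (pd / (pu * (pd - pu))) * z.1%:R - gam / (pd - pu) * geom z.1.
Definition lyap_slope := pd / (pd - pu) + gam * (pd / (pu * (pd - pu))).
Definition kappa := l * pu * pd ^+ 2 / (2 * m ^+ 2 * (pu + pd) ^+ 2).

Lemma pu_gt0 : 0 < pu. Proof. rates; rewrite /pu; apply: mulr_gt0; lra. Qed.
Lemma pd_gt0 : 0 < pd. Proof. rates; rewrite /pd; apply: mulr_gt0; lra. Qed.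
Lemma pd_subr_pu : pd - pu = m - l. Proof. rewrite /pd /pu; ring. Qed.
Lemma pd_subr_pu_gt0 : 0 < pd - pu. Proof. rates; rewrite pd_subr_pu; lra. Qed.

Lemma theta_ge0 : 0 <= theta.
Proof. by rewrite /theta divr_ge0 // ltW // ?pu_gt0 ?pd_gt0. Qed.

Lemma theta_le1 : theta <= 1.
Proof. rewrite /theta ler_pdivrMr ?pd_gt0 // mul1r; have := pd_subr_pu_gt0; lra. Qed.

Lemma gam_gt0 : 0 < gam.
Proof.
have pu0 := pu_gt0; have pd0 := pd_gt0; have dp0 := pd_subr_pu_gt0.
rewrite /gam; apply: divr_gt0; apply: mulr_gt0 => //.
- exact: mulr_gt0.
- exact: addr_gt0.
Qed.

Lemma crate_gt0 : 0 < crate.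
Proof.
have pu0 := pu_gt0; have pd0 := pd_gt0; have dp0 := pd_subr_pu_gt0.
by rewrite /crate divr_gt0 //; nra.
Qed.

Lemma geom0 : geom 0 = 0. Proof. by rewrite /geom expr0 subrr mul0r. Qed.

Lemma geom1 : geom 1 = 1.
Proof.
have pd0 := pd_gt0; have dp0 := pd_subr_pu_gt0.
by rewrite /geom /theta expr1; field; rewrite !lt0r_neq0.
Qed.

Lemma geom_ge0 x : 0 <= geom x.
Proof.
have pd0 := pd_gt0; have dp0 := pd_subr_pu_gt0.
rewrite /geom; apply: mulr_ge0; last by rewrite divr_ge0 ?ltW.
by rewrite subr_ge0 exprn_ile1 ?theta_ge0 ?theta_le1.
Qed.

Lemma geom_le x : geom x <= pd / (pd - pu).
Proof.
have pd0 := pd_gt0; have dp0 := pd_subr_pu_gt0.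
rewrite /geom; apply: ler_piMl; first by rewrite divr_ge0 ?ltW.
by have := exprn_ge0 x theta_ge0; lra.
Qed.

Lemma lyap0 : lyap (0, 0)%N = 0.
Proof. by rewrite /lyap /= geom0 !mulr0 addr0 subr0. Qed.

Lemma lyap_le z : rx_reachable z -> lyap z <= lyap_slope * backlog z.
Proof.
case: z => x b [/= le_xb _]; rewrite /lyap /lyap_slope /backlog /=.
have pu0 := pu_gt0; have pd0 := pd_gt0; have dp0 := pd_subr_pu_gt0.
have A0 : 0 <= gam * (pd / (pu * (pd - pu))).
  apply: mulr_ge0; first exact: ltW gam_gt0.
  by apply: divr_ge0; apply: ltW => //; apply: mulr_gt0.
have B0 : 0 <= gam / (pd - pu) * geom x.
  by apply: mulr_ge0 (geom_ge0 x); apply: divr_ge0; apply: ltW => //; exact: gam_gt0.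
have G0 := geom_ge0 x; have G1 := geom_le x.
have b0 : 0 <= b%:R :> R by [].
have le_xb' : x%:R <= b%:R :> R by rewrite ler_nat.
move: A0 B0 G1; set A := gam * _; set M := pd / _; set B := gam / _ * _ => A0 B0 G1.
nra.
Qed.

Lemma lyap_drift_empty : gam <= P lyap (0, 0)%N - lyap (0, 0)%N.
Proof.
have pu0 := pu_gt0; have pd0 := pd_gt0; have dp0 := pd_subr_pu_gt0; rates.
rewrite /transop !big_bool /rx_step /= /lyap /= !geom0 geom1 -subr_ge0.
set e := (X in 0 <= X); suff -> : e = pu by exact: ltW.
rewrite /e /gam /pu /pd; rewrite /pu /pd in pu0 pd0 dp0; field; neq0.
Qed.

Lemma lyap_drift_busy x b :
  gam - crate * b%:R <= P lyap (x.+1, b) - lyap (x.+1, b).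
Proof.
have pu0 := pu_gt0; have pd0 := pd_gt0; have dp0 := pd_subr_pu_gt0; rates.
have y0 : 0 <= theta ^+ x by rewrite exprn_ge0 ?theta_ge0.
have y1 : theta ^+ x <= 1 by rewrite exprn_ile1 ?theta_ge0 ?theta_le1.
have reset c : (if x == 0%N then 0%N else b)%:R * ((1 - theta ^+ x) * c) =
               b%:R * ((1 - theta ^+ x) * c) :> R.
  by case: x {y0 y1} => [|x]; rewrite ?expr0 ?subrr ?mul0r ?mulr0.
rewrite /transop !big_bool /rx_step /= ?addn0 ?addn1 /=.
rewrite /lyap /= /geom !exprS -?natr1 ?natrD reset -subr_ge0.
set e := (X in 0 <= X).
have -> : e = b%:R * crate * (1 - theta ^+ x) + pu * theta ^+ x * theta.
  rewrite /e /gam /crate /theta /pu /pd; rewrite /pu /pd in pu0 pd0 dp0; field; neq0.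
apply: addr_ge0; apply: mulr_ge0; rewrite ?subr_ge0 ?theta_ge0 //.
- by apply: mulr_ge0 => //; exact: ltW crate_gt0.
- by apply: mulr_ge0 => //; exact: ltW.
Qed.

Lemma lyap_drift z : rx_reachable z -> gam - crate * backlog z <= P lyap z - lyap z.
Proof.
case: z => [[|x] b] [_ /= b0]; last exact: lyap_drift_busy.
by rewrite /backlog b0 // mulr0 subr0; exact: lyap_drift_empty.
Qed.

Let l01 : 0 <= l <= 1. Proof. by rates; apply/andP; split; lra. Qed.
Let m01 : 0 <= m <= 1. Proof. by rates; apply/andP; split; lra. Qed.

Lemma rx_expect_backlog_ge0 t : 0 <= rx_expect l m t backlog.
Proof. by rewrite -(rx_expect_cst l m t 0); apply: ler_rx_expect. Qed.

Lemma drift_sum_bound t :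
  t%:R * gam <= (lyap_slope + crate * t%:R) * rx_expect l m t backlog.
Proof.
set Eb := rx_expect l m t backlog.
have E_lyap : rx_expect l m t lyap <= lyap_slope * Eb.
  have := rx_expect_lin l m t lyap_slope 0 backlog backlog.
  rewrite mul0r addr0 => <-; apply: ler_rx_expect => // z /lyap_le.
  by rewrite mul0r addr0.
have E_drift : t%:R * gam - crate * \sum_(s < t) rx_expect l m s backlog <=
               rx_expect l m t lyap.
  have -> : t%:R * gam - crate * \sum_(s < t) rx_expect l m s backlog =
            \sum_(s < t) rx_expect l m s (fun z => gam * 1 + - crate * backlog z).
    rewrite [RHS](eq_bigr (fun s : 'I_t => gam - crate * rx_expect l m s backlog)).
      by rewrite sumrB sumr_const card_ord mulr_natl -mulr_sumr.
    by move=> s _; rewrite rx_expect_lin rx_expect_cst mulr1 mulNr.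
  rewrite {2}/rx_expect iter_transop_telescope lyap0 add0r.
  apply: ler_sum => s _; apply: ler_rx_expect => // z /lyap_drift.
  by rewrite mulr1 mulNr.
have E_mono : crate * \sum_(s < t) rx_expect l m s backlog <= crate * (t%:R * Eb).
  apply: ler_wpM2l; first exact: ltW crate_gt0.
  by rewrite /Eb; apply: sum_rx_expect_le l01 m01 t _ (@backlog_mono R).
nra.
Qed.

Lemma rx_backlog_eventually_ge :
  exists T, forall t, (T <= t)%N -> gam / (2 * crate) <= rx_expect l m t backlog.
Proof.
have cr0 := crate_gt0; have gam0 := gam_gt0.
have pu0 := pu_gt0; have pd0 := pd_gt0; have dp0 := pd_subr_pu_gt0.
have M0 : 0 <= lyap_slope / crate.
  apply: divr_ge0; last exact: ltW.
  apply: addr_ge0; first by apply: divr_ge0; apply: ltW.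
  apply: mulr_ge0; first exact: ltW.
  by apply: divr_ge0; apply: ltW => //; apply: mulr_gt0.
exists (Num.Def.archi_bound (lyap_slope / crate)).+1 => t le_Tt.
have lt_MT := archi_boundP M0.
have le_Tt' : (Num.Def.archi_bound (lyap_slope / crate))%:R + 1 <= t%:R :> R.
  by rewrite natr1 ler_nat.
have E0 := rx_expect_backlog_ge0 t; have main := drift_sum_bound t.
have lt_Mt : lyap_slope < crate * t%:R by rewrite -ltr_pdivrMl //; lra.
have t0 : 0 < t%:R :> R by lra.
rewrite ler_pdivrMr; last by rewrite mulr_gt0.
have : t%:R * gam <= t%:R * (rx_expect l m t backlog * (2 * crate)) by nra.
by rewrite ler_pM2l.
Qed.

Lemma gam_div_crate : gam / (2 * crate) = kappa / (1 - l / m) ^+ 2.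
Proof.
have pu0 := pu_gt0; have pd0 := pd_gt0; have dp0 := pd_subr_pu_gt0; rates.
rewrite /gam /crate /kappa /pu /pd; rewrite /pu /pd in pu0 pd0 dp0; field; neq0.
Qed.

End Drift.

Lemma kappa_ge (R : realType) (l m : R) : 0 < l -> l < m -> m < 1 ->
  l * (l * (1 - m)) * (m * (1 - l)) ^+ 2 / 2 <= kappa l m.
Proof.
move=> l0 lm m1; rewrite /kappa /pu /pd.
set N := _ * _ ^+ 2; set S := _ + _.
have N0 : 0 <= N by rewrite /N !mulr_ge0 ?sqr_ge0 //; lra.
have S0 : 0 < S by rewrite /S; nra.
have S1 : S <= 1 by rewrite /S; nra.
apply: ler_wpM2l => //; rewrite lef_pV2 ?posrE ?mulr_gt0 ?exprn_gt0 //; try lra.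
have mS0 : 0 <= m * S by nra.
have mS1 : m * S <= 1 by nra.
by rewrite -mulrA -exprMn expr2; nra.
Qed.

Lemma ler_pM_sqr (R : realFieldType) (a b d a' b' d' : R) :
  0 <= a -> 0 <= b -> 0 <= d -> a <= a' -> b <= b' -> d <= d' ->
  a * b * d ^+ 2 <= a' * b' * d' ^+ 2.
Proof.
move=> a0 b0 d0 aa bb dd; rewrite !expr2.
by apply: ler_pM; rewrite ?mulr_ge0 //; apply: ler_pM.
Qed.

Lemma kappa_ge_mu_fixed (R : realType) (l m : R) : 0 < m -> m < 1 -> m / 2 < l -> l < m ->
  m ^+ 4 * (1 - m) ^+ 3 / 8 <= kappa l m.
Proof.
move=> m0 m1 ml lm; have l0 : 0 < l by lra.
apply: le_trans (kappa_ge l0 lm m1).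
have -> : m ^+ 4 * (1 - m) ^+ 3 / 8 = m / 2 * (m * (1 - m) / 2) * (m * (1 - m)) ^+ 2 / 2.
  by field.
by apply: ler_wpM2r; [lra | apply: ler_pM_sqr; nra].
Qed.

Lemma kappa_ge_lam_fixed (R : realType) (l m : R) : 0 < l -> l < m -> m < 1 ->
  (1 + l) * m < 2 * l -> l ^+ 4 * (1 - l) ^+ 3 / 4 <= kappa l m.
Proof.
move=> l0 lm m1 ml; apply: le_trans (kappa_ge l0 lm m1).
have -> : l ^+ 4 * (1 - l) ^+ 3 / 4 = l * (l * (1 - l) / 2) * (l * (1 - l)) ^+ 2 / 2.
  by field.
by apply: ler_wpM2r; [lra | apply: ler_pM_sqr; nra].
Qed.

Lemma rx_backlog_lower_bound (R : realType) (l m c : R) :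
  0 < l -> l < m -> m < 1 -> c <= kappa l m ->
  exists T, forall t, (T <= t)%N -> c / (1 - l / m) ^+ 2 <= rx_expect l m t backlog.
Proof.
move=> l0 lm m1 c_le; have [T hT] := rx_backlog_eventually_ge l0 lm m1.
exists T => t /hT; apply: le_trans; rewrite (gam_div_crate l0 lm m1).
by rewrite ler_wpM2r // invr_ge0 sqr_ge0.
Qed.

Lemma expected_queue_lower_bound (R : realType) n (l m c : R) : (0 < n)%N ->
  0 < l -> l < m -> m < 1 -> c <= kappa l m ->
  exists T, forall t, (T <= t)%N -> c / (1 - l / m) ^+ 2 <= expected_queue n l m t.
Proof.
move=> n0 l0 lm m1 c_le; have [T hT] := rx_backlog_lower_bound l0 lm m1 c_le.
exists T => t /hT /le_trans; apply.
by apply: (rx_backlog_le_expected_queue (Ordinal n0)); apply/andP; split; lra.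
Qed.

Theorem theorem1 (R : realType) (n : nat) : (0 < n)%N ->
  (forall mu : R, 0 < mu < 1 ->
     exists c : R, 0 < c /\ exists rho0 : R, rho0 < 1 /\
       forall lam : R, 0 < lam -> lam < mu -> rho0 < lam / mu ->
         exists T : nat, forall t : nat, (T <= t)%N ->
           c / (1 - lam / mu) ^+ 2 <= expected_queue n lam mu t)
  /\
  (forall lam : R, 0 < lam < 1 ->
     exists c : R, 0 < c /\ exists rho0 : R, rho0 < 1 /\
       forall mu : R, lam < mu -> mu < 1 -> rho0 < lam / mu ->
         exists T : nat, forall t : nat, (T <= t)%N ->
           c / (1 - lam / mu) ^+ 2 <= expected_queue n lam mu t).
Proof.
move=> n0; split=> [mu /andP[mu0 mu1] | lam /andP[lam0 lam1]].
- exists (mu ^+ 4 * (1 - mu) ^+ 3 / 8).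
  split; first by rewrite divr_gt0 // mulr_gt0 // exprn_gt0 // subr_gt0.
  exists (1 / 2); split=> [|lam lam0 lam_mu]; first lra.
  rewrite ltr_pdivlMr // => rho_gt; apply: expected_queue_lower_bound => //.
  by apply: kappa_ge_mu_fixed => //; lra.
- exists (lam ^+ 4 * (1 - lam) ^+ 3 / 4).
  split; first by rewrite divr_gt0 // mulr_gt0 // exprn_gt0 // subr_gt0.
  exists ((1 + lam) / 2); split=> [|mu lam_mu mu1]; first lra.
  have mu0 : 0 < mu by lra.
  rewrite ltr_pdivlMr // => rho_gt; apply: expected_queue_lower_bound => //.
  by apply: kappa_ge_lam_fixed => //; lra.
Qed.
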